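(* Let $E$ be a finite set and $\mathcal{W}\subseteq\{+,-,0\}^E$. Then $\mathcal{W}$ is an affine oriented matroid if and only if $\mathcal{W}$ satisfies: (A1') if $X,Y\in\mathcal{W}$ then $X\circ(-Y)\in\mathcal{W}$; (A2') if $X,Y\in\mathcal{W}$ with $S(X,Y)\neq\emptyset$, then $I'_e(X,Y)\cap\mathcal{W}\neq\emptyset$ for all $e\in S(X,Y)$; (A3') $\mathcal{Q}(\mathcal{W})\circ\mathcal{W}\subseteq\mathcal{W}$.
   Context: For $X\in\{+,-,0\}^E$: $X^+=\{e:X_e=+\}$, $X^-=\{e:X_e=-\}$, support $\underline{X}=X^+\cup X^-$; $(-X)_e=-X_e$; composition $(X\circ Y)_e=X_e$ if $X_e\neq0$, else $Y_e$; $S(X,Y)=(X^+\cap Y^-)\cup(X^-\cap Y^+)$; $\mathcal{A}\circ\mathcal{B}=\{A\circ B: A\in\mathcal{A}, B\in\mathcal{B}\}$. Sum: $(X+Y)_e=0$ if $e\in S(X,Y)$, else $(X\circ Y)_e$. An oriented matroid on $F$ is $\mathcal{O}\subseteq\{+,-,0\}^F$ with: (O1) zero vector in $\mathcal{O}$; (O2) $X\in\mathcal{O}\Rightarrow -X\in\mathcal{O}$; (O3) $X,Y\in\mathcal{O}\Rightarrow X\circ Y\in\mathcal{O}$; (O4) if $X,Y\in\mathcal{O}$, $\underline{X}=\underline{Y}$, $e\in S(X,Y)$, there is $Z\in\mathcal{O}$ with $Z_e=0$ and $Z_f=(X\circ Y)_f=(Y\circ X)_f$ for all $f\notin S(X,Y)$.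 $\mathcal{W}\subseteq\{+,-,0\}^E$ is an affine oriented matroid if there exist $g\notin E$ and an oriented matroid $\mathcal{O}$ on $E\cup\{g\}$ with $\mathcal{W}=\{X|_E: X\in\mathcal{O}, X_g=+\}$. For arbitrary $X,Y$ and $e\in S(X,Y)$: $I'_e(X,Y)=\{V : \underline{V}\subseteq(\underline{X}\cup\underline{Y})\setminus\{e\}, V_f=(X\circ Y)_f\ \forall f\notin S(X,Y)\}$, $I'(X,Y)=\bigcup_{e\in S(X,Y)}I'_e(X,Y)$ (empty if $S(X,Y)=\emptyset$). $\mathcal{Q}(\mathcal{W})=\{X+(-Y): X,Y\in\mathcal{W}, I'(X,-Y)\cap\mathcal{W}=I'(-X,Y)\cap\mathcal{W}=\emptyset\}$. *)

From HB Require Import structures.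
From mathcomp Require Import all_boot.
Set Implicit Arguments. Unset Strict Implicit. Unset Printing Implicit Defensive.

Inductive sign := Pos | Neg | Zero.

Definition sign_enc (s : sign) : 'I_3 :=
  match s with Pos => inord 0 | Neg => inord 1 | Zero => inord 2 end.
Definition sign_dec (i : 'I_3) : sign :=
  match val i with 0 => Pos | 1 => Neg | _ => Zero end.
Lemma sign_encK : cancel sign_enc sign_dec.
Proof. by case; rewrite /sign_dec /= inordK. Qed.
HB.instance Definition _ := Finite.copy sign (can_type sign_encK).

Definition sopp (s : sign) : sign :=
  match s with Pos => Neg | Neg => Pos | Zero => Zero end.

Notation svec E := {ffun E -> sign}.

Section SignVectors.
Variable E : finType.
Implicit Types X Y V : svec E.

Definition zerov : svec E := [ffun _ => Zero].
Definition negv X : svec E := [ffun e => sopp (X e)].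
Definition compv X Y : svec E := [ffun e => if X e == Zero then Y e else X e].
Definition supp X : {set E} := [set e | X e != Zero].
Definition sep X Y : {set E} :=
  [set e | ((X e == Pos) && (Y e == Neg)) || ((X e == Neg) && (Y e == Pos))].
Definition sumv X Y : svec E :=
  [ffun e => if e \in sep X Y then Zero else compv X Y e].

Definition Ie' X Y (e : E) : {set svec E} :=
  [set V | (supp V \subset (supp X :|: supp Y) :\ e)
         && [forall f, (f \notin sep X Y) ==> (V f == compv X Y f)]].
Definition I' X Y : {set svec E} := \bigcup_(e in sep X Y) Ie' X Y e.

Definition Qset (W : {set svec E}) : {set svec E} :=
  [set sumv X (negv Y) | X in W, Y in W &
     (I' X (negv Y) :&: W == set0) && (I' (negv X) Y :&: W == set0)].

Definition oriented_matroid (O : {set svec E}) : Prop :=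
  [/\ zerov \in O,
      (forall X, X \in O -> negv X \in O),
      (forall X Y, X \in O -> Y \in O -> compv X Y \in O) &
      (forall X Y e, X \in O -> Y \in O -> supp X = supp Y -> e \in sep X Y ->
         exists2 Z, Z \in O &
           Z e = Zero /\
           (forall f, f \notin sep X Y ->
              Z f = compv X Y f /\ Z f = compv Y X f))].
End SignVectors.

(* Restriction of a sign vector on E ∪ {g} (= option E, g = None) to E. *)
Definition restrictv (E : finType) (X : svec (option E)) : svec E :=
  [ffun e => X (Some e)].

(* Affine oriented matroid: the new element g is modelled as None in option E. *)
Definition affine_oriented_matroid (E : finType) (W : {set svec E}) : Prop :=
  exists O : {set svec (option E)},
    oriented_matroid O /\
    W = [set restrictv X | X in O & X None == Pos].

From mathcomp Require Import all_boot.
Set Implicit Arguments. Unset Strict Implicit. Unset Printing Implicit Defensive.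

(* Forward: (A1') and (A2') are composition and elimination in an oriented
   matroid O on E + g whose positive part is W, and each X + (-Y) in Q(W) is the
   restriction of the eliminant of g between (X,+) and (-Y,-): were it nonzero
   at some e of S(X,-Y), a further elimination at e would put a vector of W into
   I'(X,-Y) or I'(-X,Y).
   Backward: let T be the set of Z with Z o W and (-Z) o W inside W; the vectors
   of W, -W and T, given sign +, - and 0 at g, form an oriented matroid.  Members
   of T come by induction on |S(X,-Y)|: either X + (-Y) is in Q(W), hence in T
   by (A3'), or a vector of W in I'_e(X,-Y) replaces X and shrinks S(X,-Y).
   This yields closure of W under composition and the eliminations of (O4). *)

Definition sign_eqb (a b : sign) : bool :=
  match a, b with Pos, Pos | Neg, Neg | Zero, Zero => true | _, _ => false end.

Lemma sign_eqE (a b : sign) : (a == b) = sign_eqb a b.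
Proof. by apply/eqP/idP => [->|]; case: a; case: b. Qed.

Definition scomp (a b : sign) : sign := if a is Zero then b else a.

Definition ssep (a b : sign) : bool :=
  match a, b with Pos, Neg | Neg, Pos => true | _, _ => false end.

Section SignVectors.
Variable E : finType.
Implicit Types X Y Z U V : svec E.

Lemma negvE X f : negv X f = sopp (X f).
Proof. by rewrite ffunE. Qed.

Lemma compvE X Y f : compv X Y f = scomp (X f) (Y f).
Proof. by rewrite ffunE sign_eqE; case: (X f). Qed.

Lemma sepE X Y f : (f \in sep X Y) = ssep (X f) (Y f).
Proof. by rewrite inE !sign_eqE; case: (X f); case: (Y f). Qed.

Lemma sumvE X Y f :
  sumv X Y f = if ssep (X f) (Y f) then Zero else scomp (X f) (Y f).
Proof. by rewrite ffunE sepE compvE. Qed.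

Lemma negvK : involutive (@negv E).
Proof. by move=> X; apply/ffunP => f; rewrite !negvE; case: (X f). Qed.

Lemma negv_compv X Y : negv (compv X Y) = compv (negv X) (negv Y).
Proof. by apply/ffunP => f; rewrite !(negvE, compvE); case: (X f). Qed.

Lemma compvA : associative (@compv E).
Proof. by move=> X Y Z; apply/ffunP => f; rewrite !compvE; case: (X f). Qed.

Lemma sepC X Y : sep X Y = sep Y X.
Proof. by apply/setP => f; rewrite !sepE; case: (X f); case: (Y f). Qed.

Lemma sep_negv X Y : sep (negv X) Y = sep X (negv Y).
Proof. by apply/setP => f; rewrite !sepE !negvE; case: (X f); case: (Y f). Qed.

Lemma sep_negvC X Y : sep Y (negv X) = sep X (negv Y).
Proof. by rewrite sepC sep_negv. Qed.

Lemma sep_negv2 X Y : sep (negv X) (negv Y) = sep X Y.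
Proof. by rewrite sep_negv negvK. Qed.

Lemma supp_negv X : supp (negv X) = supp X.
Proof. by apply/setP => f; rewrite !inE negvE !sign_eqE; case: (X f). Qed.

Lemma sumvC X Y : sumv X Y = sumv Y X.
Proof. by apply/ffunP => f; rewrite !sumvE; case: (X f); case: (Y f). Qed.

Lemma negv_sumv X Y : negv (sumv X Y) = sumv (negv X) (negv Y).
Proof. by apply/ffunP => f; rewrite !(negvE, sumvE); case: (X f); case: (Y f). Qed.

Lemma compvC_off_sep X Y f : f \notin sep X Y -> compv X Y f = compv Y X f.
Proof. by rewrite sepE !compvE; case: (X f); case: (Y f). Qed.

Definition eq_off_sep X Y Z := forall f, f \notin sep X Y -> Z f = compv X Y f.

Lemma eq_off_sepC X Y Z : eq_off_sep X Y Z -> eq_off_sep Y X Z.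
Proof. by move=> XYZ f; rewrite sepC => fXY; rewrite XYZ // compvC_off_sep. Qed.

Lemma eq_off_sepN X Y Z :
  eq_off_sep X Y Z -> eq_off_sep (negv X) (negv Y) (negv Z).
Proof.
move=> XYZ f; rewrite sep_negv negvK => fXY.
by rewrite -negv_compv !negvE XYZ.
Qed.

Lemma sep_eq_off_sep X Y V : eq_off_sep X Y V -> sep V Y \subset sep X Y.
Proof.
move=> XYV; apply/subsetP => f; apply: contraLR => fXY.
by move: fXY (XYV f fXY); rewrite !sepE compvE => + ->; case: (X f); case: (Y f).
Qed.

Lemma eq_off_sep_trans X Y V Z :
  eq_off_sep X Y V -> eq_off_sep V Y Z -> eq_off_sep X Y Z.
Proof.
move=> XYV VYZ f fXY; have fVY : f \notin sep V Y.
  by apply: contra fXY; apply: subsetP; apply: sep_eq_off_sep.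
by rewrite VYZ // compvE XYV // !compvE; case: (X f); case: (Y f).
Qed.

Lemma compv_eq_off_sep X Y Z : eq_off_sep Y (negv X) Z -> compv X Z = compv X Y.
Proof.
move=> YXZ; apply/ffunP => f; rewrite !compvE.
have [fYX | fYX] := boolP (f \in sep Y (negv X)); last first.
  by rewrite YXZ // compvE negvE; case: (X f); case: (Y f).
by move: fYX; rewrite sepE negvE; case: (X f); case: (Y f).
Qed.

Lemma mem_Ie' X Y V e : V \in Ie' X Y e <-> V e = Zero /\ eq_off_sep X Y V.
Proof.
rewrite inE; split.
- case/andP => /subsetP suppV /forallP XYV; split.
    by have := suppV e; rewrite !inE !sign_eqE eqxx; case: (V e) => // /(_ isT).
  by move=> f fXY; have /implyP/(_ fXY)/eqP := XYV f.
- case=> Ve XYV; apply/andP; split.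
    apply/subsetP => f; rewrite !inE !sign_eqE.
    have [-> | fe] := eqVneq f e; first by rewrite Ve.
    case fXY: (f \in sep X Y); last by rewrite XYV ?fXY // compvE; case: (X f).
    by move: fXY; rewrite sepE; case: (X f); case: (Y f).
  by apply/forallP => f; apply/implyP => fXY; rewrite XYV.
Qed.

Lemma Ie'C X Y e : Ie' X Y e = Ie' Y X e.
Proof.
by apply/setP => V; apply/idP/idP => /mem_Ie'[Ve XYV];
  apply/mem_Ie'; split => //; apply: eq_off_sepC.
Qed.

Lemma Ie'N X Y V e : (negv V \in Ie' (negv X) (negv Y) e) = (V \in Ie' X Y e).
Proof.
apply/idP/idP => /mem_Ie'[Ve XYV]; apply/mem_Ie'; split.
- by move: Ve; rewrite negvE; case: (V e).
- by rewrite -(negvK X) -(negvK Y) -(negvK V); apply: eq_off_sepN.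
- by rewrite negvE Ve.
- exact: eq_off_sepN.
Qed.

Lemma Ie'_eq_off_sep X Y V U e :
  eq_off_sep X Y V -> U \in Ie' V Y e -> U \in Ie' X Y e.
Proof.
move=> XYV /mem_Ie'[Ue VYU]; apply/mem_Ie'; split => //.
exact: eq_off_sep_trans VYU.
Qed.

Lemma sumv_Ie' X Y e : e \in sep X Y -> sumv X Y \in Ie' X Y e.
Proof.
move=> eXY; apply/mem_Ie'; split; first by rewrite sumvE -sepE eXY.
by move=> f; rewrite sumvE compvE -sepE => /negbTE ->.
Qed.

Lemma Ie'_compv_supp X Y X0 U e :
  supp X = supp Y -> U \in Ie' (compv X X0) (compv Y X0) e ->
  forall f, f \notin sep X Y -> U f = compv X X0 f.
Proof.
move=> /setP suppXY /mem_Ie'[_ XYU] f; have := XYU f; have := suppXY f.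
rewrite !sepE !inE !sign_eqE !compvE.
by case: (X f); case: (Y f); case: (X0 f) => //= _ ->.
Qed.

Lemma Ie'_compv_pair X Y X0 U U' Z e :
  supp X = supp Y -> U \in Ie' (compv X X0) (compv Y X0) e ->
  U' \in Ie' (compv (negv X) X0) (compv (negv Y) X0) e ->
  {in supp X0 :\: supp X, forall f, Z f = Zero} -> eq_off_sep U (negv U') Z ->
  Z \in Ie' X Y e.
Proof.
move=> suppXY UIe U'Ie ZX0 UU'Z; have /setP suppf := suppXY.
have /mem_Ie'[Ue _] := UIe; have /mem_Ie'[U'e _] := U'Ie.
have offU := Ie'_compv_supp suppXY UIe.
have suppXYN : supp (negv X) = supp (negv Y) by rewrite !supp_negv.
have offU' := Ie'_compv_supp suppXYN U'Ie; rewrite sep_negv2 in offU'.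
apply/mem_Ie'; split; first by rewrite UU'Z ?sepE ?compvE ?negvE ?Ue ?U'e.
move=> f fXY; have := suppf f; have := ZX0 f; have := UU'Z f.
rewrite !sepE !in_setD !inE !compvE !negvE (offU f fXY) (offU' f fXY).
rewrite !compvE !negvE !sign_eqE; move: fXY; rewrite sepE.
by case: (X f); case: (Y f); case: (X0 f) => //= _ ZU ZX0f _;
  by [apply: ZX0f | apply: ZU].
Qed.

End SignVectors.

Lemma om_elimination (T : finType) (O : {set svec T}) X Y e :
  oriented_matroid O -> X \in O -> Y \in O -> e \in sep X Y ->
  exists2 Z, Z \in O & Z \in Ie' X Y e.
Proof.
case=> _ _ compO elimO XO YO eXY.
have suppXY : supp (compv X Y) = supp (compv Y X).
  by apply/setP => f; rewrite !inE !sign_eqE !compvE; case: (X f); case: (Y f).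
have sepXY : sep (compv X Y) (compv Y X) = sep X Y.
  by apply/setP => f; rewrite !sepE !compvE; case: (X f); case: (Y f).
have [|Z ZO [Ze XYZ]] := elimO _ _ e (compO _ _ XO YO) (compO _ _ YO XO) suppXY.
  by rewrite sepXY.
exists Z => //; apply/mem_Ie'; split => // f fXY.
rewrite -sepXY in fXY; have [-> _] := XYZ f fXY.
by rewrite !compvE; move: fXY; rewrite sepXY sepE; case: (X f); case: (Y f).
Qed.

Lemma oriented_matroid_Ie' (T : finType) (O : {set svec T}) :
  zerov T \in O -> (forall X, X \in O -> negv X \in O) ->
  (forall X Y, X \in O -> Y \in O -> compv X Y \in O) ->
  (forall X Y e, X \in O -> Y \in O -> supp X = supp Y -> e \in sep X Y ->
     exists2 Z, Z \in O & Z \in Ie' X Y e) ->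
  oriented_matroid O.
Proof.
move=> zeroO negO compO elimO; split=> // X Y e XO YO suppXY eXY.
have [Z ZO /mem_Ie'[Ze XYZ]] := elimO X Y e XO YO suppXY eXY.
by exists Z => //; split => // f fXY; rewrite XYZ // compvC_off_sep.
Qed.

Section Lifting.
Variable E : finType.
Implicit Types (X Y Z : svec E) (Xh : svec (option E)).

Definition liftv (s : sign) X : svec (option E) :=
  [ffun o => if o is Some e then X e else s].

Lemma liftvE s X o : liftv s X o = if o is Some e then X e else s.
Proof. by rewrite ffunE. Qed.

Lemma liftvK s : cancel (liftv s) (@restrictv E).
Proof. by move=> X; apply/ffunP => f; rewrite ffunE liftvE. Qed.

Lemma restrictvK Xh : liftv (Xh None) (restrictv Xh) = Xh.
Proof. by apply/ffunP => -[f|]; rewrite liftvE ?ffunE. Qed.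

Lemma liftv_rect (P : svec (option E) -> Prop) :
  (forall s X, P (liftv s X)) -> forall Xh, P Xh.
Proof. by move=> PX Xh; rewrite -(restrictvK Xh). Qed.

Lemma negv_liftv s X : negv (liftv s X) = liftv (sopp s) (negv X).
Proof. by apply/ffunP => -[f|]; rewrite !(negvE, liftvE). Qed.

Lemma compv_liftv s t X Y :
  compv (liftv s X) (liftv t Y) = liftv (scomp s t) (compv X Y).
Proof. by apply/ffunP => -[f|]; rewrite !(compvE, liftvE). Qed.

Lemma supp_liftv s t X Y : supp (liftv s X) = supp (liftv t Y) ->
  sign_eqb s Zero = sign_eqb t Zero /\ supp X = supp Y.
Proof.
move/setP=> suppXY; split.
  by have := suppXY None; rewrite !inE !liftvE !sign_eqE; case: (s); case: (t).
by apply/setP => f; have := suppXY (Some f); rewrite !inE !liftvE.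
Qed.

Lemma eq_off_sep_liftv s t u X Y Z :
  eq_off_sep (liftv s X) (liftv t Y) (liftv u Z) <->
  eq_off_sep X Y Z /\ (~~ ssep s t -> u = scomp s t).
Proof.
rewrite /eq_off_sep; split=> [XYZ | [XYZ stu] [f|]].
- split=> [f fXY | st].
    by have := XYZ (Some f); rewrite sepE !liftvE -sepE compvE !liftvE -compvE; apply.
  by have := XYZ None; rewrite sepE !liftvE compvE !liftvE; apply.
- by rewrite sepE !liftvE compvE !liftvE -compvE -sepE; apply: XYZ.
- by rewrite sepE !liftvE compvE !liftvE; apply: stu.
Qed.

Lemma mem_Ie'_liftv s t u X Y Z e :
  liftv u Z \in Ie' (liftv s X) (liftv t Y) (Some e) <->
  (~~ ssep s t -> u = scomp s t) /\ Z \in Ie' X Y e.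
Proof.
split.
- case/mem_Ie'; rewrite liftvE => Ze /eq_off_sep_liftv[XYZ stu].
  by split=> //; apply/mem_Ie'.
- case=> stu /mem_Ie'[Ze XYZ]; apply/mem_Ie'; rewrite liftvE.
  by split=> //; apply/eq_off_sep_liftv.
Qed.

Lemma mem_Ie'_liftv_None s t u X Y Z : ssep s t ->
  liftv u Z \in Ie' (liftv s X) (liftv t Y) None <-> u = Zero /\ eq_off_sep X Y Z.
Proof.
move=> st; split.
- by case/mem_Ie'; rewrite liftvE => -> /eq_off_sep_liftv[].
- case=> -> XYZ; apply/mem_Ie'; rewrite liftvE.
  by split=> //; apply/eq_off_sep_liftv; rewrite st.
Qed.

End Lifting.

Definition affine_part (E : finType) (O : {set svec (option E)}) : {set svec E} :=
  [set restrictv X | X in O & X None == Pos].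

Lemma mem_affine_part (E : finType) (O : {set svec (option E)}) X :
  (X \in affine_part O) = (liftv Pos X \in O).
Proof.
apply/imsetP/idP => [[Xh] | XO]; last first.
  by exists (liftv Pos X); rewrite ?liftvK // inE XO liftvE eqxx.
rewrite inE => /andP[XhO /eqP XhPos] ->.
by rewrite -(restrictvK Xh) XhPos in XhO.
Qed.

Lemma mem_I' (E : finType) (X Y V : svec E) e :
  e \in sep X Y -> V \in Ie' X Y e -> V \in I' X Y.
Proof. by move=> eXY VIe; apply/bigcupP; exists e. Qed.

Section AffinePart.
Variables (E : finType) (O : {set svec (option E)}).
Hypothesis omO : oriented_matroid O.
Local Notation W := (affine_part O).
Implicit Types X Y Q : svec E.

Lemma affine_compN X Y : X \in W -> Y \in W -> compv X (negv Y) \in W.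
Proof.
have [_ negO compO _] := omO.
rewrite !mem_affine_part => XO /negO; rewrite negv_liftv => YO.
by have := compO _ _ XO YO; rewrite compv_liftv.
Qed.

Lemma affine_elim X Y e :
  X \in W -> Y \in W -> e \in sep X Y -> Ie' X Y e :&: W != set0.
Proof.
rewrite !mem_affine_part => XO YO eXY.
have [|Zh] := om_elimination (e := Some e) omO XO YO.
  by rewrite sepE !liftvE -sepE.
elim/liftv_rect: Zh => u Z ZO /mem_Ie'_liftv[/(_ isT) uPos ZIe].
by rewrite uPos in ZO; apply/set0Pn; exists Z; rewrite inE ZIe mem_affine_part.
Qed.

Lemma affine_Qset_lift Q : Q \in Qset W -> liftv Zero Q \in O.
Proof.
have [_ negO _ _] := omO.
case/imset2P=> X Y XW; rewrite inE => /andP[YW /andP[/eqP noXY /eqP noYX]] ->.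
move: XW YW; rewrite !mem_affine_part => XW YW.
have /negO := YW; rewrite negv_liftv => nYO.
have [|Zh] := om_elimination (e := None) omO XW nYO; first by rewrite sepE !liftvE.
elim/liftv_rect: Zh => u Z ZO /mem_Ie'_liftv_None[//| u0 XYZ]; subst u.
suff -> : sumv X (negv Y) = Z by [].
apply/ffunP => f; rewrite sumvE -sepE; case: ifPn => fXY; last by rewrite XYZ // compvE.
apply/eqP; apply: contraT => Zf.
have [sZY | sZX] : ssep (Z f) (negv Y f) \/ ssep (Z f) (X f).
  by move: fXY Zf; rewrite sepE negvE sign_eqE; case: (Z f); case: (X f); case: (Y f); auto.
- have [|Uh] := om_elimination (e := Some f) omO ZO nYO; first by rewrite sepE !liftvE.
  elim/liftv_rect: Uh => v U UO /mem_Ie'_liftv[/(_ isT) vNeg /(Ie'_eq_off_sep XYZ) UIe].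
  have : negv U \in I' (negv X) Y :&: W.
    rewrite inE mem_affine_part; apply/andP; split.
      by apply: (mem_I' (e := f)); rewrite ?sep_negv // -Ie'N !negvK.
    by have /negO := UO; rewrite negv_liftv vNeg.
  by rewrite noYX inE.
- have [|Uh] := om_elimination (e := Some f) omO ZO XW; first by rewrite sepE !liftvE.
  elim/liftv_rect: Uh => v U UO /mem_Ie'_liftv[/(_ isT) vPos].
  move/(Ie'_eq_off_sep (eq_off_sepC XYZ)); rewrite Ie'C => UIe.
  have : U \in I' X (negv Y) :&: W.
    by rewrite vPos in UO; rewrite inE mem_affine_part (mem_I' fXY UIe).
  by rewrite noXY inE.
Qed.

Lemma affine_Qcomp Q X : Q \in Qset W -> X \in W -> compv Q X \in W.
Proof.
have [_ _ compO _] := omO.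
move=> /affine_Qset_lift QO; rewrite !mem_affine_part => XO.
by have := compO _ _ QO XO; rewrite compv_liftv.
Qed.

End AffinePart.

Section AffineAxioms.
Variables (E : finType) (W : {set svec E}).
Implicit Types X Y Z U V Q : svec E.

Definition comp_stab : {set svec E} :=
  [set Z | [forall X in W, (compv Z X \in W) && (compv (negv Z) X \in W)]].

Lemma comp_stabP Z :
  reflect (forall X, X \in W -> compv Z X \in W /\ compv (negv Z) X \in W)
          (Z \in comp_stab).
Proof.
rewrite inE; apply: (iffP forall_inP) => [ZW X /ZW/andP // | ZW X /ZW[]].
by move=> -> ->.
Qed.

Lemma comp_stab0 : zerov E \in comp_stab.
Proof.
have zeroK X : compv (zerov E) X = X by apply/ffunP => f; rewrite compvE ffunE.
have zeroN : negv (zerov E) = zerov E by apply/ffunP => f; rewrite !ffunE.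
by apply/comp_stabP => X; rewrite zeroN zeroK.
Qed.

Lemma comp_stabN Z : Z \in comp_stab -> negv Z \in comp_stab.
Proof. by move/comp_stabP=> ZW; apply/comp_stabP => X /ZW[]; rewrite negvK. Qed.

Lemma comp_stab_comp Z1 Z2 :
  Z1 \in comp_stab -> Z2 \in comp_stab -> compv Z1 Z2 \in comp_stab.
Proof.
move=> /comp_stabP Z1W /comp_stabP Z2W; apply/comp_stabP => X /Z2W[Z2X nZ2X].
by rewrite negv_compv -!compvA; split; [apply: (Z1W _ Z2X).1 | apply: (Z1W _ nZ2X).2].
Qed.

Definition witnesses X Y e : {set svec E} :=
  W :&: (Ie' X (negv Y) e :|: Ie' (negv X) Y e).

Lemma witnessesC X Y e : witnesses X Y e = witnesses Y X e.
Proof. by rewrite /witnesses setUC [Ie' (negv Y) _ _]Ie'C [Ie' (negv X) _ _]Ie'C. Qed.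

Lemma sumv_Qset X Y : X \in W -> Y \in W ->
  (forall e, e \in sep X (negv Y) -> witnesses X Y e = set0) ->
  sumv X (negv Y) \in Qset W.
Proof.
move=> XW YW free; apply/imset2P; exists X Y => //.
rewrite inE YW /=; apply/andP; split; apply/eqP/setP => V; rewrite in_setI in_set0;
  apply/negP => /andP[/bigcupP[e eXY VIe] VW]; rewrite ?sep_negv in eXY;
  by have /setP/(_ V) := free e eXY; rewrite in_set0 !in_setI in_setU VW VIe ?orbT.
Qed.

Hypothesis W_compN : forall X Y, X \in W -> Y \in W -> compv X (negv Y) \in W.
Hypothesis W_elim : forall X Y e,
  X \in W -> Y \in W -> e \in sep X Y -> Ie' X Y e :&: W != set0.
Hypothesis W_Qcomp : forall Q X, Q \in Qset W -> X \in W -> compv Q X \in W.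

Lemma W_eliminant X Y e : X \in W -> Y \in W -> e \in sep X Y ->
  exists2 U, U \in W & U \in Ie' X Y e.
Proof.
by move=> XW YW /(W_elim XW YW)/set0Pn[U]; rewrite inE => /andP[UIe UW]; exists U.
Qed.

Lemma compv_stab X Z : X \in W -> Z \in comp_stab -> compv X Z \in W.
Proof.
move=> XW /comp_stabP/(_ X XW)[_ nZX]; have := W_compN XW nZX.
suff -> : compv X (negv (compv (negv Z) X)) = compv X Z by [].
by apply/ffunP => f; rewrite !(compvE, negvE); case: (X f); case: (Z f).
Qed.

Lemma sumv_stab X Y : X \in W -> Y \in W ->
  (forall e, e \in sep X (negv Y) -> witnesses X Y e = set0) ->
  sumv X (negv Y) \in comp_stab.
Proof.
move=> XW YW free; apply/comp_stabP => V VW; split; apply: W_Qcomp => //.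
  exact: sumv_Qset.
rewrite negv_sumv negvK sumvC; apply: sumv_Qset => // e.
by rewrite sep_negvC witnessesC; apply: free.
Qed.

Section Reduction.
Variables (X Y V : svec E) (F : {set E}).
Hypothesis XYV : eq_off_sep X (negv Y) V.
Hypothesis freeF : forall e, e \in F -> witnesses X Y e = set0.

Lemma reduction_free e : e \in F -> witnesses V Y e = set0.
Proof.
move=> eF; apply/setP => U; rewrite in_set0 in_setI in_setU.
apply/negP => /andP[UW UIe].
have /setP/(_ U) := freeF eF; rewrite in_set0 in_setI in_setU UW /=.
case/orP: UIe => [/(Ie'_eq_off_sep XYV) -> //|].
by have := eq_off_sepN XYV; rewrite negvK => nXYV /(Ie'_eq_off_sep nXYV) ->; rewrite orbT.
Qed.

Lemma reduction_support :
  X \in W -> V \in W -> F \subset sep X (negv Y) -> F \subset sep V (negv Y).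
Proof.
move=> XW VW FXY; apply/subsetP => e eF; have eXY := subsetP FXY e eF.
have noIe U : U \in W -> U \notin Ie' X (negv Y) e.
  move=> UW; apply/negP => UIe.
  by have /setP/(_ U) := freeF eF; rewrite in_set0 in_setI in_setU UW UIe.
have [Ve | nzVe] := eqVneq (V e) Zero.
  by case/negP: (noIe V VW); apply/mem_Ie'.
have [sVX | nsVX] := boolP (e \in sep V X).
  (* eliminating [e] between [V] and [X] would produce a witness *)
  have [U UW] := W_eliminant VW XW sVX.
  by move/(Ie'_eq_off_sep (eq_off_sepC XYV)); rewrite Ie'C => UIe; case/negP: (noIe U UW).
by move: eXY nzVe nsVX; rewrite !sepE negvE sign_eqE; case: (V e); case: (X e); case: (Y e).
Qed.

End Reduction.

Lemma stab_eliminant X Y (F : {set E}) :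
  X \in W -> Y \in W -> F \subset sep X (negv Y) ->
  (forall e, e \in F -> witnesses X Y e = set0) ->
  exists2 Z, Z \in comp_stab & {in F, forall e, Z e = Zero} /\ eq_off_sep X (negv Y) Z.
Proof.
have [n] := ubnP #|sep X (negv Y)|; elim: n => // n IHn in X Y F *.
rewrite ltnS => sizeXY XW YW FXY freeF.
have [free | ] := boolP [forall e in sep X (negv Y), witnesses X Y e == set0].
  exists (sumv X (negv Y)); first by apply: sumv_stab => // e /(forall_inP free)/eqP.
  split=> [e /(subsetP FXY) | f]; rewrite sumvE -sepE; first by move->.
  by move/negbTE->; rewrite compvE.
case/forall_inPn => e eXY /set0Pn[V]; rewrite inE => /andP[VW VXY].
wlog VIe : X Y F sizeXY XW YW FXY freeF eXY VXY / V \in Ie' X (negv Y) e.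
  move=> XYcase; case/setUP: (VXY) => [|VIe]; first exact: XYcase.
  have [||||||||Z ZT [ZF YXZ]] := XYcase Y X F; rewrite 1?sep_negvC //.
  - by move=> f; rewrite witnessesC; apply: freeF.
  - by rewrite Ie'C [Ie' (negv Y) _ _]Ie'C setUC.
  - by rewrite Ie'C.
  exists (negv Z); first exact: comp_stabN.
  split=> [f /ZF | ]; first by rewrite negvE => ->.
  by have := eq_off_sepN YXZ; rewrite negvK; apply: eq_off_sepC.
have /mem_Ie'[Ve XYV] := VIe.
have ltVX : #|sep V (negv Y)| < #|sep X (negv Y)|.
  apply/proper_card/properP; split; first exact: sep_eq_off_sep XYV.
  by exists e; rewrite // sepE Ve.
have [||Z ZT [ZF VYZ]] := IHn V Y F (leq_trans ltVX sizeXY) VW YW.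
- exact: (reduction_support XYV freeF XW VW FXY).
- exact: (reduction_free XYV freeF).
by exists Z => //; split=> //; apply: eq_off_sep_trans VYZ.
Qed.

Lemma W_comp X Y : X \in W -> Y \in W -> compv X Y \in W.
Proof.
move=> XW YW; have [||Z ZT [_ YXZ]] := stab_eliminant (F := set0) YW XW.
- exact: sub0set.
- by move=> e; rewrite inE.
by rewrite -(compv_eq_off_sep YXZ); apply: compv_stab.
Qed.

(* Eliminate between [q1 o X0] and [q2 o X0] and between their opposites, for
   an [X0] in [W] whose support meets [~: supp q1] least; the two eliminants
   agree exactly on the part of [X0] outside [supp q1], which minimality makes
   witness-free. *)
Lemma stab_elimination q1 q2 e :
  q1 \in comp_stab -> q2 \in comp_stab -> supp q1 = supp q2 -> e \in sep q1 q2 ->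
  exists2 Z, Z \in comp_stab & Z \in Ie' q1 q2 e.
Proof.
move=> q1T q2T suppq e12.
have [W0 | [X1 X1W]] := set_0Vmem W.
  by exists (sumv q1 q2); [apply/comp_stabP => X; rewrite W0 inE | apply: sumv_Ie'].
pose m X := #|supp X :\: supp q1|.
have [X0 X0W minX0] := arg_minnP m X1W.
have /comp_stabP/(_ X0 X0W)[q1X0W nq1X0W] := q1T.
have /comp_stabP/(_ X0 X0W)[q2X0W nq2X0W] := q2T.
have sep_e A B : e \in sep A B -> e \in sep (compv A X0) (compv B X0).
  by rewrite !sepE !compvE; case: (A e); case: (B e).
have [U UW UIe] := W_eliminant q1X0W q2X0W (sep_e _ _ e12).
have /sep_e e12N : e \in sep (negv q1) (negv q2) by rewrite sep_negv2.
have [U' U'W U'Ie] := W_eliminant nq1X0W nq2X0W e12N.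
have offU := Ie'_compv_supp suppq UIe.
have suppqN : supp (negv q1) = supp (negv q2) by rewrite !supp_negv.
have offU' := Ie'_compv_supp suppqN U'Ie; rewrite sep_negv2 in offU'.
have sep_off f : f \notin supp q1 -> f \notin sep q1 q2.
  by have /setP/(_ f) := suppq; rewrite sepE !inE !sign_eqE; case: (q1 f); case: (q2 f).
pose F := supp X0 :\: supp q1.
have [||Z ZT [ZF UU'Z]] := stab_eliminant (F := F) UW U'W.
- apply/subsetP => f; rewrite sepE in_setD => /andP[q1f].
  rewrite negvE (offU f (sep_off f q1f)) (offU' f (sep_off f q1f)) !compvE negvE.
  by move: q1f; rewrite !inE !sign_eqE; case: (q1 f); case: (X0 f).
- move=> e0 e0F; apply/setP => V; rewrite in_set0 in_setI in_setU.
  apply/negP => /andP[VW VIe].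
  have [Ve0 VUU'] : V e0 = Zero /\ forall f, U f = Zero -> U' f = Zero -> V f = Zero.
    case/orP: VIe => /mem_Ie'[Ve0 UU'V]; split=> // f Uf U'f;
      by rewrite UU'V ?sepE ?compvE ?negvE Uf ?U'f.
  have : m V < m X0.
    apply/proper_card/properP; split; last first.
      by exists e0; rewrite // !inE Ve0 !sign_eqE andbF.
    apply/subsetP => f; rewrite !in_setD => /andP[q1f Vf]; rewrite q1f /=.
    have fq := sep_off f q1f; move: q1f Vf; rewrite !inE sign_eqE => q1f Vf.
    apply: contraNT Vf; rewrite negbK sign_eqE => X0f; apply/eqP; apply: VUU'.
    + by rewrite (offU f fq) compvE; move: q1f X0f; case: (q1 f); case: (X0 f).
    + by rewrite (offU' f fq) compvE negvE; move: q1f X0f; case: (q1 f); case: (X0 f).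
  by rewrite ltnNge minX0.
by exists Z => //; apply: Ie'_compv_pair UIe U'Ie ZF UU'Z.
Qed.

Definition om_of_affine : {set svec (option E)} :=
  [set Xh : svec (option E) | match Xh None with
            | Pos => restrictv Xh \in W
            | Neg => negv (restrictv Xh) \in W
            | Zero => restrictv Xh \in comp_stab end].

Lemma mem_om_liftv s X : liftv s X \in om_of_affine =
  match s with Pos => X \in W | Neg => negv X \in W | Zero => X \in comp_stab end.
Proof. by rewrite inE liftvE liftvK. Qed.

Lemma om_of_affineN Xh : Xh \in om_of_affine -> negv Xh \in om_of_affine.
Proof.
elim/liftv_rect: Xh => -[] X; rewrite negv_liftv !mem_om_liftv ?negvK //.
exact: comp_stabN.
Qed.

Lemma compv_om_of_affine X Yh :
  X \in W -> Yh \in om_of_affine -> compv X (restrictv Yh) \in W.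
Proof.
move=> XW; elim/liftv_rect: Yh => -[] Y; rewrite mem_om_liftv liftvK => YW.
- exact: W_comp.
- by rewrite -[Y]negvK; apply: W_compN.
- exact: compv_stab.
Qed.

Lemma om_of_affine_comp Xh Yh : Xh \in om_of_affine -> Yh \in om_of_affine ->
  compv Xh Yh \in om_of_affine.
Proof.
elim/liftv_rect: Xh => s X; elim/liftv_rect: Yh => t Y XO YO.
have /compv_om_of_affine := YO; have /om_of_affineN/compv_om_of_affine := YO.
rewrite negv_liftv !liftvK compv_liftv mem_om_liftv => compNY compY.
move: XO YO; rewrite !mem_om_liftv; case: s => //= XW.
- by move=> _; apply: compY.
- by move=> _; rewrite negv_compv; apply: compNY.
case: t => //= YW.
- by have /comp_stabP/(_ Y YW)[] := XW.
- by have /comp_stabP/(_ _ YW)[_] := XW; rewrite negv_compv.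
- exact: comp_stab_comp.
Qed.

Lemma om_of_affine_elim_mixed X Y e : X \in W -> Y \in W ->
  e \in sep (liftv Pos X) (liftv Neg (negv Y)) ->
  exists2 Zh, Zh \in om_of_affine & Zh \in Ie' (liftv Pos X) (liftv Neg (negv Y)) e.
Proof.
move=> XW YW; case: e => [e | _]; last first.
  have [||Z ZT [_ XYZ]] := stab_eliminant (F := set0) XW YW.
  - exact: sub0set.
  - by move=> e; rewrite inE.
  by exists (liftv Zero Z); [rewrite mem_om_liftv | apply/mem_Ie'_liftv_None].
rewrite sepE !liftvE -sepE => eXY.
have [free | ] := eqVneq (witnesses X Y e) set0.
  have [||Z ZT [ZF XYZ]] := stab_eliminant (F := [set e]) XW YW.
  - by rewrite sub1set.
  - by move=> f /set1P ->.
  exists (liftv Zero Z); first by rewrite mem_om_liftv.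
  by apply/mem_Ie'_liftv; split=> //; apply/mem_Ie'; rewrite ZF ?inE.
case/set0Pn => V; rewrite in_setI in_setU => /andP[VW /orP[VIe | VIe]].
  by exists (liftv Pos V); [rewrite mem_om_liftv | apply/mem_Ie'_liftv].
exists (liftv Neg (negv V)); first by rewrite mem_om_liftv negvK.
by apply/mem_Ie'_liftv; rewrite -[X]negvK Ie'N.
Qed.

Lemma om_of_affine_elim Xh Yh e :
  Xh \in om_of_affine -> Yh \in om_of_affine -> supp Xh = supp Yh ->
  e \in sep Xh Yh -> exists2 Zh, Zh \in om_of_affine & Zh \in Ie' Xh Yh e.
Proof.
have elimPos X Y e' : X \in W -> Y \in W -> e' \in sep (liftv Pos X) (liftv Pos Y) ->
    exists2 Zh, Zh \in om_of_affine & Zh \in Ie' (liftv Pos X) (liftv Pos Y) e'.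
  move=> XW YW; case: e' => [e'|]; rewrite sepE !liftvE // -sepE => eXY.
  have [U UW UIe] := W_eliminant XW YW eXY.
  by exists (liftv Pos U); [rewrite mem_om_liftv | apply/mem_Ie'_liftv].
elim/liftv_rect: Xh => s X; elim/liftv_rect: Yh => t Y.
rewrite !mem_om_liftv => XO YO /supp_liftv[st suppXY].
case: s t st XO YO => [] [] //= _ XO YO eXY.
- exact: elimPos.
- by rewrite -(negvK Y) in eXY *; apply: om_of_affine_elim_mixed.
- rewrite Ie'C -(negvK X); rewrite sepC -(negvK X) in eXY.
  exact: om_of_affine_elim_mixed.
- have [|Zh ZO ZIe] := elimPos _ _ e XO YO.
    by move: eXY; rewrite -sep_negv2 !negv_liftv.
  exists (negv Zh); first exact: om_of_affineN.
  by rewrite -Ie'N negvK !negv_liftv.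
- case: e eXY => [e|]; rewrite sepE !liftvE // -sepE => eXY.
  have [Z ZT ZIe] := stab_elimination XO YO suppXY eXY.
  by exists (liftv Zero Z); [rewrite mem_om_liftv | apply/mem_Ie'_liftv].
Qed.

Lemma om_of_affineP : oriented_matroid om_of_affine.
Proof.
apply: oriented_matroid_Ie'.
- have -> : zerov (option E) = liftv Zero (zerov E).
    by apply/ffunP => -[f|]; rewrite liftvE !ffunE.
  by rewrite mem_om_liftv comp_stab0.
- exact: om_of_affineN.
- exact: om_of_affine_comp.
- exact: om_of_affine_elim.
Qed.

End AffineAxioms.

Lemma affine_part_om_of_affine (E : finType) (W : {set svec E}) :
  affine_part (om_of_affine W) = W.
Proof. by apply/setP => X; rewrite mem_affine_part mem_om_liftv. Qed.

Theorem corollary5p2 (E : finType) (W : {set svec E}) :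
  affine_oriented_matroid W <->
  [/\ (* (A1') *)
      (forall X Y, X \in W -> Y \in W -> compv X (negv Y) \in W),
      (* (A2') *)
      (forall X Y, X \in W -> Y \in W -> sep X Y != set0 ->
         forall e, e \in sep X Y -> Ie' X Y e :&: W != set0) &
      (* (A3') *)
      (forall Q X, Q \in Qset W -> X \in W -> compv Q X \in W)].
Proof.
split=> [[O [omO ->]] | [compN elimW Qcomp]].
  split=> [X Y | X Y XW YW _ e | Q X]; first exact: affine_compN.
    exact: affine_elim.
  exact: affine_Qcomp.
have elimW' X Y e : X \in W -> Y \in W -> e \in sep X Y -> Ie' X Y e :&: W != set0.
  by move=> XW YW eXY; apply: elimW => //; apply/set0Pn; exists e.
exists (om_of_affine W); split; last exact: esym (affine_part_om_of_affine W).
exact: om_of_affineP compN elimW' Qcomp.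
Qed.
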